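(* Let $\mathcal{G}$ be an $A$-compatible P-graph with associated map $\mu$ satisfying condition ( * ): for every $\ell'\in\{1,\dots,m\}$ and $i\in\{1,\dots,d\}$, every directed path from $j_i$ to $\ell'$ that contains an edge in $\mathcal{E}^-$ goes through $m+1$. Let $k\in\{1,\dots,d+1\}$, $\widetilde B\in\mathcal{B}^k$, $\ell\in\{1,\dots,m+1\}\setminus\widetilde B$, $B=\widetilde B\cup\{\ell\}$. For $\zeta\in\Theta_\mathcal{G}(F,B)$ define \[\mathcal{E}^F_\zeta=\{E\subseteq\zeta\cap\operatorname{im}\mu : (\zeta\setminus E)\cup\mu^*(E)\in\Theta_\mathcal{G}(F,B)\}.\] Then $\mathcal{E}^F_\zeta$ is closed under union: if $E_1,E_2\in\mathcal{E}^F_\zeta$ then $E_1\cup E_2\in\mathcal{E}^F_\zeta$.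
   Context: $R$ is a partially ordered commutative ring. Let $d\ge0$, $m_0,\dots,m_d\ge0$ with $m=m_0+\cdots+m_d$. $A\in R^{m\times m}$, $b\in R^m$: for $i=1,\dots,d$ the rows indexed by $\mathcal{N}_i=\{1+\sum_{j<i}m_j,\dots,\sum_{j\le i}m_j\}$ are zero outside the columns indexed by $\mathcal{N}_i$, where they form a square $A_i$, and the corresponding subvector $b^i$ has at most one nonzero entry; the last $m_0$ rows form an arbitrary $A_0\in R^{m_0\times m}$ with arbitrary $b^0$. $\mathcal{N}=\{1,\dots,m+1\}$, $\mathcal{N}_0=\{m-m_0+1,\dots,m+1\}$, $\mathcal{N}_{d+1}=\{m+1\}$. Fixed $j_i\in\mathcal{N}_i$ with $b_j=0$ for all $j\le m-m_0$, $j\notin\{j_1,\dots,j_d\}$; $F=\{j_1,\dots,j_d,m+1\}$. $\mathcal{B}^k=\{\{w_j:j\in\{1,\dots,d+1\}\setminus\{k\}\}: w_j\in\mathcal{N}_j\}$. A multidigraph $\mathcal{G}=(\mathcal{N},\mathcal{E})$ has source/target maps $s,t$, no self-loops, labeling $\pi\colon\mathcal{E}\to R$, Laplacian $L_{ij}=\sum_{e:s(e)=j,t(e)=i}\pi(e)$ ($i\ne j$), $L_{ii}=-\sum_{k\ne i}L_{ki}$. $\mathcal{G}$ is $A$-compatible if (i) no edge goes from a node in $\mathcal{N}_i$ ($i\ge0$) to a node in $\mathcal{N}_j$ with $i\ne j$, $j\ge1$; (ii) for $\ell\notin F$ the $\ell$-th row of $L$ equals the $\ell$-th row of $(A\,|\,b)$.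 Trees/forests: subgraphs with acyclic underlying undirected graph (connected for trees), rooted at $N$ if $N$ is the only node without outgoing edges; spanning means node set $\mathcal{N}$; forests are identified with edge sets. $\Theta_\mathcal{G}(F,B)$ ($|F|=|B|$): spanning forests with $|B|$ components, each containing a node of $F$ and being a tree rooted at a node of $B$. A cycle is a closed directed path with no repeated nodes. $\mathcal{E}^-=\{e:\pi(e)\in R_{<0}\}$, $\mathcal{E}^+=\{e:\pi(e)\in R_{>0}\}$. $\mathcal{G}$ is a P-graph with associated map $\mu\colon\mathcal{E}^-\to\mathcal{P}(\mathcal{E}^+)$ if (i) $\mathcal{E}=\mathcal{E}^+\sqcup\mathcal{E}^-$; (ii) every cycle contains at most one edge of $\mathcal{E}^-$; (iii) for $e\in\mathcal{E}^-$: (a) $e'\in\mu(e)\Rightarrow s(e')=s(e)$; (b) $e'\in\mu(e)\Rightarrow$ every cycle containing $e'$ contains $t(e)$; (c) $\mu(e)\cap\mu(e')=\emptyset$ for $e\ne e'$; (iv) $\pi(e)+\sum_{e'\in\mu(e)}\pi(e')\in R_{\ge0}$ for all $e\in\mathcal{E}^-$. $\operatorname{im}\mu=\bigcup_e\mu(e)$, and $\mu^*\colon\operatorname{im}\mu\to\mathcal{E}^-$, $\mu^*(e')=e$ if $e'\in\mu(e)$. *)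

(* Nodes are 0-based: paper node v (1 <= v <= m+1) is the
   ordinal v-1 : 'I_m.+1; paper node m+1 is ord_max. *)
From HB Require Import structures.
From mathcomp Require Import all_boot all_order all_algebra.
Set Implicit Arguments. Unset Strict Implicit. Unset Printing Implicit Defensive.
Import GRing.Theory.
Local Open Scope ring_scope.

Record po_ring (R : comNzRingType) := PoRing {
  po_le : rel R;
  po_refl : reflexive po_le;
  po_anti : antisymmetric po_le;
  po_trans : transitive po_le;
  po_add : forall x y z, po_le x y -> po_le (x + z) (y + z);
  po_mul : forall x y, po_le 0 x -> po_le 0 y -> po_le 0 (x * y) }.

Definition po_lt (R : comNzRingType) (P : po_ring R) (x y : R) : bool :=
  po_le P x y && (x != y).

Definition msum (d : nat) (mb : nat -> nat) : nat := (\sum_(i < d.+1) mb i)%N.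
(* 0-based first index of N_i, i >= 1 : sum_{1 <= j < i} m_j *)
Definition bstart (mb : nat -> nat) (i : nat) : nat := (\sum_(1 <= j < i) mb j)%N.
(* inblk d mb i v : the (0-based) node v lies in N_i, for i = 0, ..., d+1 *)
Definition inblk (d : nat) (mb : nat -> nat) (i v : nat) : bool :=
  if i == 0%N then (msum d mb - mb 0%N <= v <= msum d mb)%N
  else if (i <= d)%N then (bstart mb i <= v < bstart mb i + mb i)%N
  else if i == d.+1 then v == msum d mb else false.

Definition Fset (d m : nat) (jn : nat -> 'I_m.+1) : {set 'I_m.+1} :=
  [set x : 'I_m.+1 | (x == ord_max) || [exists i : 'I_d, x == jn i.+1]].

Section Graphs.
Variables (R : comNzRingType) (E : finType) (n : nat).
Variables (s t : E -> 'I_n) (pi : E -> R).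

Definition lapl_off (i j : 'I_n) : R := \sum_(e | (s e == j) && (t e == i)) pi e.
Definition laplacian : 'M[R]_n :=
  \matrix_(i, j) if i == j then - \sum_(k | k != i) lapl_off k i else lapl_off i j.

Definition dcycle (c : seq E) : bool :=
  [&& c != [::], cycle (fun e f => t e == s f) c & uniq (map s c)].

Definition dpath (u v : 'I_n) (p : seq E) : bool :=
  [&& map s p == belast u (map t p), last u (map t p) == v & uniq (u :: map t p)].

Definition joins (e : E) (u v : 'I_n) : bool :=
  ((s e == u) && (t e == v)) || ((s e == v) && (t e == u)).

Definition ucycle (es : seq E) (vs : seq 'I_n) : bool :=
  [&& (0 < size es)%N, size vs == size es, uniq es, uniq vs &
      all (fun x => joins x.1 x.2.1 x.2.2) (zip es (zip vs (rot 1 vs)))].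

Definition acyclic (Z : {set E}) : Prop :=
  forall es vs, all (fun e => e \in Z) es -> ~~ ucycle es vs.

Definition uadj (Z : {set E}) : rel 'I_n := fun u v => [exists e in Z, joins e u v].
Definition comp (Z : {set E}) (u : 'I_n) : {set 'I_n} := [set w | connect (uadj Z) u w].

Definition Theta (F B : {set 'I_n}) (Z : {set E}) : Prop :=
  [/\ acyclic Z,
      #|[set comp Z u | u : 'I_n]| = #|B| &
      forall u : 'I_n,
        (exists w, w \in comp Z u /\ w \in F) /\
        (exists r, [/\ r \in B, r \in comp Z u &
           forall w, w \in comp Z u -> (~~ [exists e in Z, s e == w]) = (w == r)])].

End Graphs.

Section PGraph.
Variables (R : comNzRingType) (P : po_ring R) (E : finType) (n : nat).
Variables (s t : E -> 'I_n) (pi : E -> R) (mu : E -> {set E}).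

Definition Eneg : pred E := fun e => po_lt P (pi e) 0.
Definition Epos : pred E := fun e => po_lt P 0 (pi e).

(* mu is only meaningful on E^- *)
Definition is_Pgraph : Prop :=
  [/\ (forall e, Epos e || Eneg e),
      (forall c, dcycle s t c -> (count Eneg c <= 1)%N),
      (forall e, Eneg e -> [/\ mu e \subset [set x | Epos x],
          (forall e', e' \in mu e -> s e' = s e) &
          (forall e', e' \in mu e -> forall c, dcycle s t c -> e' \in c -> t e \in map s c)]),
      (forall e e', Eneg e -> Eneg e' -> e != e' -> [disjoint mu e & mu e']) &
      (forall e, Eneg e -> po_le P 0 (pi e + \sum_(e' in mu e) pi e'))].

Definition immu : {set E} := \bigcup_(e | Eneg e) mu e.
Definition mustar (X : {set E}) : {set E} :=
  [set e | Eneg e && [exists e' in X, e' \in mu e]].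

End PGraph.

From Pilot Require Import Defs.
From HB Require Import structures.
From mathcomp Require Import all_boot all_order all_algebra zify.
Set Implicit Arguments. Unset Strict Implicit. Unset Printing Implicit Defensive.

(* An element of Theta(F, B) is an edge set in which every node has out-degree at most one,
   there is no directed cycle, the sinks are exactly the nodes of B, and every root is the root
   of some node of F; roots are reached by following the unique outgoing edges.
   For Z = (zeta \ (E1 u E2)) u mu^*(E1 u E2) the first three properties come for free: each edge
   of mu^*(E) leaves from the source of the edge of E it replaces, the sets mu(e) are disjoint,
   and a directed cycle of Z lying in neither exchanged forest for E1 nor for E2 would contain
   two negative edges.  So it suffices that every node of F has the same root in Z as in zeta.
   The walk in Z from j_i never uses an edge of mu^*(E1 u E2): up to the first such edge it lies
   in one of the two exchanged forests and, by condition ( * ), passes through m+1, which would put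
   the distinct F-nodes j_i and m+1 in the same tree although |F| <= |B|.  The walk from m+1
   stays in the block N_0, where the only root other than m+1 can be l. *)

Lemma path_zip_belast (T : Type) (r : rel T) y p :
  path r y p -> all (fun uv => r uv.1 uv.2) (zip (belast y p) p).
Proof. by elim: p y => //= z p IH y /andP [-> /IH]. Qed.

Lemma zip_belast_asym (T : eqType) (y : T) p a b : uniq (y :: p) ->
  (a, b) \in zip (belast y p) p -> (b, a) \in zip (belast y p) p -> False.
Proof.
have snd_in (x c d : T) q : (c, d) \in zip (belast x q) q -> d \in q.
  by move=> /(map_f snd); rewrite -/(unzip2 _) unzip2_zip // size_belast.
elim: p y => //= z p IH y; rewrite !inE negb_or => /andP [/andP [yz yp] uq].
case/orP => [/eqP [-> ->]|ab]; case/orP => [/eqP [ba az]|ba].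
- by rewrite ba az eqxx in yz.
- by rewrite (snd_in _ _ _ _ ba) in yp.
- by rewrite -ba (snd_in _ _ _ _ ab) in yp.
- exact: IH uq ab ba.
Qed.

Lemma belast_traject (T : Type) (f : T -> T) x k :
  belast x (traject f (f x) k) = traject f x k.
Proof. by elim: k x => //= k IH x; rewrite IH. Qed.

Lemma mem_zip (S T : eqType) (a : seq S) (b : seq T) x y :
  (x, y) \in zip a b -> x \in a /\ y \in b.
Proof.
elim: a b => [|x' a IH] [|y' b] //=; rewrite !inE => /orP [/eqP [-> ->]|/IH [-> ->]].
  by rewrite !eqxx.
by rewrite !orbT.
Qed.

Section FunctionalGraph.
Variables (E : finType) (n : nat) (s t : E -> 'I_n).
Implicit Types (X Y : {set E}) (u v w : 'I_n) (e : E).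

Definition has_out X u : bool := [exists e in X, s e == u].
Definition out_edge X u : option E := [pick e in X | s e == u].
Definition succ X u : 'I_n := if out_edge X u is Some e then t e else u.
Definition root X u : 'I_n := iter n (succ X) u.
Definition walk X u p : seq E := pmap (out_edge X) (traject (succ X) u p).
Definition dcycle_free X := forall c, dcycle s t c -> ~ {subset c <= X}.
Definition rooted_forest (B : {set 'I_n}) X :=
  [/\ {in X &, injective s}, dcycle_free X & forall u, has_out X u = (u \notin B)].

Variant out_edge_spec X u : option E -> Type :=
  | OutEdge e of e \in X & s e = u : out_edge_spec X u (Some e)
  | NoOutEdge of ~~ has_out X u : out_edge_spec X u None.

Lemma out_edgeP X u : out_edge_spec X u (out_edge X u).
Proof.
rewrite /out_edge; case: pickP => [e /andP [eX /eqP <-]|none]; first exact: OutEdge.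
by apply: NoOutEdge; apply/existsP => -[e /andP [eX se]]; move: (none e); rewrite eX se.
Qed.

Lemma has_out_edge X e : e \in X -> has_out X (s e).
Proof. by move=> eX; apply/existsP; exists e; rewrite eX eqxx. Qed.

Lemma out_edge_Some X u e : out_edge X u = Some e -> [/\ e \in X, s e = u & succ X u = t e].
Proof. by rewrite /succ; case: out_edgeP => // g gX sg [<-]. Qed.

Lemma has_out_Some X u : has_out X u -> exists e, out_edge X u = Some e.
Proof. by case: out_edgeP => [e|/negP//]; exists e. Qed.

Lemma succ_sink X u : ~~ has_out X u -> succ X u = u.
Proof. by rewrite /succ; case: out_edgeP => // e eX <-; rewrite has_out_edge. Qed.

Lemma iter_succ_sink X u p : ~~ has_out X u -> iter p (succ X) u = u.
Proof. by move=> hu; elim: p => //= p ->; apply: succ_sink. Qed.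

Lemma succ_edge X e : {in X &, injective s} -> e \in X -> succ X (s e) = t e.
Proof.
move=> injX eX; rewrite /succ; case: out_edgeP => [g gX /(injX _ _ gX eX) -> //|].
by rewrite has_out_edge.
Qed.

Lemma has_out_iter X u p r : r <= p ->
  has_out X (iter p (succ X) u) -> has_out X (iter r (succ X) u).
Proof.
move=> /subnK <-; rewrite iterD; apply: contraTT => sink.
by rewrite iter_succ_sink.
Qed.

Lemma iter_succ_eq X Y u p :
  (forall r, r < p -> succ X (iter r (succ X) u) = succ Y (iter r (succ X) u)) ->
  iter p (succ X) u = iter p (succ Y) u.
Proof.
elim: p => //= p IH eqXY.
by rewrite eqXY // -IH // => r lt_rp; apply: eqXY; apply: ltnW.
Qed.

Lemma succ_eq_sub X Y u : {in Y &, injective s} ->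
  (forall e, out_edge X u = Some e -> e \in Y) -> (has_out Y u -> has_out X u) ->
  succ X u = succ Y u.
Proof.
move=> injY XY outYX; rewrite /succ.
case: (out_edgeP X u) XY => [e eX <- /(_ e erefl) eY|noX _].
  by case: (out_edgeP Y (s e)) => [e' e'Y /(injY _ _ e'Y eY) ->|]; rewrite ?has_out_edge.
case: (out_edgeP Y u) => // e eY se.
by move: noX; rewrite outYX // -se has_out_edge.
Qed.

Lemma walk_map X u p : has_out X (iter p (succ X) u) ->
  map s (walk X u p.+1) = traject (succ X) u p.+1 /\
  map t (walk X u p.+1) = traject (succ X) (succ X u) p.+1.
Proof.
elim: p u => [|p IH] u hp.
  have [e ue] := has_out_Some hp; have [_ se te] := out_edge_Some ue.
  by rewrite /walk /= ue /= se te.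
have [e ue] := has_out_Some (has_out_iter (leq0n p.+1) hp).
have [_ se te] := out_edge_Some ue.
rewrite iterSr in hp; have [IHs IHt] := IH _ hp.
rewrite /walk trajectS [pmap _ _]/= ue -/(walk X (succ X u) p.+1) /= IHs IHt.
by rewrite se te.
Qed.

Lemma iter_succ_closed X (S : pred 'I_n) u p :
  (forall e, S (s e) -> S (t e)) -> S u -> S (iter p (succ X) u).
Proof.
move=> closedS Su; elim: p => //= p; rewrite {2}/succ.
by case: out_edgeP => // e _ <-; apply: closedS.
Qed.

Lemma sink_of_iter_cycle X y k :
  dcycle_free X -> iter k.+1 (succ X) y = y -> ~~ has_out X y.
Proof.
move=> acX fky; apply/negP => outy; set f := succ X in fky.
have periodic c : iter (c * k.+1) f y = y by elim: c => // c IH; rewrite mulSn iterD IH.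
have all_out a : has_out X (iter a f y).
  by apply: (has_out_iter (leq_pmulr a (ltn0Sn k))); rewrite periodic.
have [e0 _] := has_out_Some outy.
pose g z := odflt e0 (out_edge X z).
have gP a : [/\ g (iter a f y) \in X, s (g (iter a f y)) = iter a f y
              & t (g (iter a f y)) = f (iter a f y)].
  by have [e ue] := has_out_Some (all_out a); have [] := out_edge_Some ue; rewrite /g ue.
apply: (acX (map g (orbit f y))); last first.
  by move=> _ /mapP [_ /trajectP [a _ ->] ->]; have [] := gP a.
apply/and3P; split; first by case: (orbit f y) (in_orbit f y).
  rewrite cycle_map (@eq_in_cycle _ (mem (orbit f y)) _ (frel f)).
  - by apply/(orbitPcycle 0 3); exists k.
  - move=> _ _ /trajectP [a _ ->] /trajectP [b _ ->] /=.
    by have [_ _ ->] := gP a; have [_ -> _] := gP b.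
  - exact/allP.
have : map (s \o g) (orbit f y) = map id (orbit f y).
  by apply/eq_in_map => _ /trajectP [a _ ->] /=; have [_ -> _] := gP a.
by rewrite -map_comp => ->; rewrite map_id orbit_uniq.
Qed.

Lemma uniq_traject_succ X u p : dcycle_free X ->
  has_out X (iter p (succ X) u) -> uniq (traject (succ X) u p.+2).
Proof.
move=> acX outp; rewrite looping_uniq; apply/negP => /trajectP [a lt_ap loop].
have cyc : iter (p - a).+1 (succ X) (iter a (succ X) u) = iter a (succ X) u.
  by rewrite -iterD -subSn // subnK // ltnW.
have sink := sink_of_iter_cycle acX cyc.
by move: outp; rewrite -(subnK (ltnSE lt_ap)) iterD iter_succ_sink // (negbTE sink).
Qed.

Lemma root_sink X u : dcycle_free X -> ~~ has_out X (root X u).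
Proof.
move=> acX; apply/negP => /(uniq_traject_succ acX) /card_uniqP.
have := max_card (mem (traject (succ X) u n.+2)).
by rewrite size_traject card_ord => /[swap] ->; lia.
Qed.

Lemma root_id X u : ~~ has_out X u -> root X u = u.
Proof. exact: iter_succ_sink. Qed.

Lemma root_succ X u : ~~ has_out X (root X u) -> root X (succ X u) = root X u.
Proof. by move=> sink; rewrite /root -iterSr iterS succ_sink. Qed.

Lemma root_iter X u p : ~~ has_out X (root X u) -> root X (iter p (succ X) u) = root X u.
Proof. by move=> sink; elim: p => //= p IH; rewrite root_succ IH. Qed.

Lemma root_eq_closed B X Y (S : pred 'I_n) u :
  rooted_forest B X -> rooted_forest B Y -> (forall e, S (s e) -> S (t e)) -> S u ->
  (u \notin B -> {in B &, forall x y, S x -> S y -> x = y}) -> root X u = root Y u.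
Proof.
move=> [_ acX outX] [_ acY outY] closedS Su uniqB.
have [uB|uNB] := boolP (u \in B); first by rewrite !root_id // ?outX ?outY uB.
apply: uniqB; rewrite ?iter_succ_closed //.
  by move: (root_sink u acX); rewrite outX negbK.
by move: (root_sink u acY); rewrite outY negbK.
Qed.

Lemma mem_walk_out_edge X u p r e :
  r < p -> out_edge X (iter r (succ X) u) = Some e -> e \in walk X u p.
Proof.
by move=> lt_rp ue; rewrite /walk mem_pmap -ue map_f //; apply/trajectP; exists r.
Qed.

Lemma dpath_walk X u p : dcycle_free X -> has_out X (iter p (succ X) u) ->
  dpath s t u (iter p.+1 (succ X) u) (walk X u p.+1).
Proof.
move=> acX outp; rewrite /dpath; have [-> ->] := walk_map outp.
by rewrite belast_traject last_traject -trajectS uniq_traject_succ // !eqxx.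
Qed.

Lemma root_edge X e : {in X &, injective s} -> dcycle_free X -> e \in X ->
  root X (s e) = root X (t e).
Proof. by move=> injX acX eX; rewrite -(succ_edge injX eX) root_succ ?root_sink. Qed.

Lemma uadj_sym X : symmetric (uadj s t X).
Proof.
by move=> u v; apply/existsP/existsP => -[e /andP [eX j]]; exists e; rewrite eX /joins orbC.
Qed.

Lemma connect_iter_succ X Y u p : (forall w e, out_edge X w = Some e -> e \in Y) ->
  connect (uadj s t Y) u (iter p (succ X) u).
Proof.
move=> XY; elim: p => //= p IH; apply: connect_trans IH _.
set x := iter p (succ X) u; case ue: (out_edge X x) => [e|]; last by rewrite /succ ue.
have [_ se ->] := out_edge_Some ue; apply: connect1; apply/existsP; exists e.
by rewrite (XY _ _ ue) /joins se !eqxx.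
Qed.

Lemma connect_root X u : connect (uadj s t X) u (root X u).
Proof. by apply: connect_iter_succ => w e /out_edge_Some []. Qed.

Lemma comp_root X u : {in X &, injective s} -> dcycle_free X ->
  Defs.comp s t X u = [set w | root X w == root X u].
Proof.
move=> injX acX; apply/setP => w; rewrite !inE; apply/idP/eqP.
  move=> /connectP [p + ->]; elim: p u => //= v p IH u /andP [/existsP [e /andP [eX je]] pv].
  by rewrite IH //; case/orP: je => /andP [/eqP <- /eqP <-]; rewrite root_edge.
move=> eq_root; apply: connect_trans (connect_root X u) _.
by rewrite (sym_connect_sym (uadj_sym X)) -eq_root connect_root.
Qed.

Lemma connect_not_acyclic X e x y : e \in X -> joins s t e x y -> x != y ->
  connect (uadj s t (X :\ e)) y x -> ~ acyclic s t X.
Proof.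
move=> eX jxy neq_xy /connectP [p0 pth0 xe0] acX.
case/shortenP: pth0 xe0 => p pth uq _ xe.
have sz : size (belast y p) = size p by rewrite size_belast.
set pr := zip (belast y p) p.
pose pe uv := odflt e [pick g in X :\ e | joins s t g uv.1 uv.2].
have peP uv : uv \in pr -> pe uv \in X :\ e /\ joins s t (pe uv) uv.1 uv.2.
  move=> /(allP (path_zip_belast pth)) /existsP [g0 /andP [g0X j0]].
  rewrite /pe; case: pickP => [g /andP [gX jg] //|/(_ g0)].
  by rewrite g0X j0.
have pe_inj : {in pr &, injective pe}.
  move=> [a b] [c d] ab cd eq_pe; have [_ j1] := peP _ ab; have [_ j2] := peP _ cd.
  move: j1 j2; rewrite eq_pe /joins /=; move: (pe (c, d)) => g.
  case/orP => /andP [/eqP sa /eqP tb]; case/orP => /andP [/eqP sc /eqP td];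
    first [by rewrite -sa -tb sc td
          | exfalso; apply: (zip_belast_asym uq ab); by rewrite -sa -tb sc td].
apply: (negP (acX (rcons (map pe pr) e) (y :: p) _)).
  apply/allP => g; rewrite mem_rcons inE => /orP [/eqP -> //|/mapP [uv /peP []]].
  by rewrite inE => /andP [_ ?] _ ->.
have uniq_pr : uniq pr.
  apply: (@map_uniq _ _ fst); rewrite -/(unzip1 _) unzip1_zip ?sz //.
  by move: uq; rewrite lastI rcons_uniq => /andP [].
apply/and5P; split => //.
- by rewrite size_rcons.
- by rewrite size_rcons size_map size_zip sz minnn.
- rewrite rcons_uniq (map_inj_in_uniq pe_inj) uniq_pr andbT.
  by apply/mapP => -[uv /peP [] /setD1P [] /eqP + _ _ eq_e]; apply.
rewrite rot1_cons {1}lastI -xe zip_rcons // zip_rcons ?size_map //.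
rewrite all_rcons /= jxy (_ : zip (map pe pr) pr = [seq (pe uv, uv) | uv <- pr]) ?all_map.
  by apply/allP => uv /peP [].
by elim: (pr) => //= uv r ->.
Qed.

(* As many cycle edges as cycle nodes and out-degree at most one: every cycle node is the source
   of a cycle edge, so the walk from a cycle node stays on the cycle and never reaches a sink. *)
Lemma forest_acyclic X : {in X &, injective s} -> dcycle_free X -> acyclic s t X.
Proof.
move=> injX acX es vs esX; apply/negP => /and5P [es_gt0 /eqP size_vs uniq_es _ joins_es].
have ends e : e \in es -> s e \in vs /\ t e \in vs.
  have sizeP : size es <= size (zip vs (rot 1 vs)) by rewrite size_zip size_rot minnn size_vs.
  rewrite -(unzip1_zip sizeP) => /mapP [[e' [a b]] /[dup] /mem_zip [_ ab] + /= ee'].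
  rewrite -ee' => /(allP joins_es); have [av] := mem_zip ab; rewrite mem_rot => bv.
  by case/orP => /andP [/eqP -> /eqP ->].
have sub_vs : {subset map s es <= vs} by move=> _ /mapP [e ees ->]; exact: (ends e ees).1.
have [_ vs_out] := uniq_min_size (etrans (map_inj_in_uniq (sub_in2 (allP esX) injX)) uniq_es)
  sub_vs (eq_leq (etrans size_vs (esym (size_map s es)))).
have vs_step v : v \in vs -> has_out X v && (succ X v \in vs).
  rewrite -vs_out => /mapP [e ees ->]; have eX := allP esX e ees.
  by rewrite has_out_edge // succ_edge // (ends e ees).2.
have /hasP [v vsv _] : has predT vs by rewrite has_predT size_vs.
have iter_vs p : iter p (succ X) v \in vs.
  by elim: p => //= p IH; rewrite (andP (vs_step _ IH)).2.
by move: (root_sink v acX); rewrite (andP (vs_step _ (iter_vs n))).1.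
Qed.

Lemma connect_edge_path Y a q z : path (fun e f => t e == s f) a (rcons q z) ->
  {subset q <= Y} -> connect (uadj s t Y) (t a) (s z).
Proof.
elim: q a => [|e q IH] a /=; first by rewrite andbT => /eqP ->.
case/andP => /eqP -> pq qY; apply: connect_trans (IH e pq _); last first.
  by move=> g gq; apply: qY; rewrite inE gq orbT.
by apply: connect1; apply/existsP; exists e; rewrite qY ?mem_head // /joins !eqxx.
Qed.

Hypothesis no_loop : forall e, s e != t e.

Lemma acyclic_dcycle_free X : acyclic s t X -> dcycle_free X.
Proof.
move=> acX [|e c] // /and3P [_ cyc /map_uniq /= /andP [ec _]] cX.
apply: (connect_not_acyclic (cX e (mem_head _ _)) _ (no_loop e) _ acX).
  by rewrite /joins !eqxx.
apply: connect_edge_path cyc _ => g gc; rewrite !inE cX ?inE ?gc ?orbT // andbT.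
by apply: contraNneq ec => <-.
Qed.

Lemma card_comp_sinks X : {in X &, injective s} -> dcycle_free X ->
  #|[set Defs.comp s t X u | u : 'I_n]| = #|[set u | ~~ has_out X u]|.
Proof.
move=> injX acX.
have -> : [set Defs.comp s t X u | u : 'I_n] = Defs.comp s t X @: [set u | ~~ has_out X u].
  apply/setP => C; apply/imsetP/imsetP => [[u _ ->]|[u _ ->]]; last by exists u.
  exists (root X u); first by rewrite inE root_sink.
  by rewrite !comp_root // (root_id (root_sink u acX)).
apply: card_in_imset => a b; rewrite !inE => a_sink b_sink.
rewrite !comp_root // !root_id // => /setP /(_ a).
by rewrite !inE root_id // eqxx => /esym /eqP.
Qed.

Section Theta.
Variables (F B : {set 'I_n}) (X : {set E}).
Hypothesis thX : Theta s t F B X.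

Lemma Theta_sink u w : w \in Defs.comp s t X u -> ~~ has_out X w ->
  w \in B /\ forall w', w' \in Defs.comp s t X u -> ~~ has_out X w' -> w' = w.
Proof.
case: thX => _ _ /(_ u) [_ [r [rB _ is_r]]] wu w_sink.
have -> : w = r by apply/eqP; rewrite -is_r.
by split=> // w' w'u w'_sink; apply/eqP; rewrite -is_r.
Qed.

(* Two edges leaving [v] would lead to the unique sink of its component along two undirected
   routes, one of which avoids the first edge. *)
Lemma Theta_outdeg : {in X &, injective s}.
Proof.
have [acX _ _] := thX; have acX' := acyclic_dcycle_free acX.
move=> e1 e2 e1X e2X se; apply/eqP/negPn/negP => ne.
set v := s e1 in se; have [g vg] := has_out_Some (has_out_edge e1X).
have [e [eX ev eg]] : exists e, [/\ e \in X, s e = v & e != g].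
  case: (e1 =P g) => [<-|]; last by exists e1; split=> //; apply/eqP.
  by exists e2; split; rewrite // eq_sym.
have XY w g' : out_edge X w = Some g' -> g' \in X :\ e.
  move=> wg'; have [g'X sg' _] := out_edge_Some wg'; rewrite !inE g'X andbT.
  by apply: contraNneq eg => g'e; subst g'; move: wg'; rewrite -sg' ev vg => -[->].
have root_te : root X (t e) \in Defs.comp s t X v.
  rewrite inE; apply: connect_trans (connect_root X (t e)).
  by apply: connect1; apply/existsP; exists e; rewrite eX /joins ev !eqxx.
have root_v : root X v \in Defs.comp s t X v by rewrite inE connect_root.
have [_ unique] := Theta_sink root_v (root_sink v acX').
have eq_root := unique _ root_te (root_sink (t e) acX').
apply: (connect_not_acyclic eX (_ : joins s t e v (t e)) _ _ acX).
- by rewrite /joins ev !eqxx.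
- by rewrite -ev no_loop.
apply: connect_trans (connect_iter_succ (t e) n XY) _.
rewrite -/(root X (t e)) eq_root (sym_connect_sym (uadj_sym _)).
exact: connect_iter_succ.
Qed.

Lemma Theta_has_out u : has_out X u = (u \notin B).
Proof.
have [acX card_comp _] := thX.
have sinksB : [set u | ~~ has_out X u] \subset B.
  apply/subsetP => w; rewrite inE => w_sink.
  have ww : w \in Defs.comp s t X w by rewrite inE connect0.
  by have [] := Theta_sink ww w_sink.
have /eqP <- : [set u | ~~ has_out X u] == B.
  rewrite eqEcard sinksB -card_comp card_comp_sinks ?leqnn //.
    exact: Theta_outdeg.
  exact: acyclic_dcycle_free.
by rewrite inE negbK.
Qed.

End Theta.

Lemma ThetaP {F B X} : Theta s t F B X <->
  rooted_forest B X /\ forall u, exists2 f, f \in F & root X f = root X u.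
Proof.
split=> [thX|[[injX acX outB] coverF]].
  have injX := Theta_outdeg thX; have [/acyclic_dcycle_free acX _ coverF] := thX.
  split; first by split=> //; apply: Theta_has_out thX.
  move=> u; have [[f [fu fF]] _] := coverF u; exists f => //.
  by move: fu; rewrite comp_root // inE => /eqP.
have sinkB u : (~~ has_out X u) = (u \in B) by rewrite outB negbK.
split; first exact: forest_acyclic.
  rewrite card_comp_sinks //; apply: eq_card => u; rewrite inE; exact: sinkB.
move=> u; rewrite comp_root //; split.
  by have [f fF ru] := coverF u; exists f; rewrite inE ru eqxx.
exists (root X u); rewrite -sinkB root_sink // inE (root_id (root_sink u acX)) eqxx.
split=> // w; rewrite inE => /eqP wu.
by apply/idP/eqP => [/root_id <-|->]; rewrite ?wu ?root_sink.
Qed.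

Lemma Theta_root_inj F B X : Theta s t F B X -> #|F| <= #|B| -> {in F &, injective (root X)}.
Proof.
move=> /ThetaP [[_ acX outB] coverF] le_FB; apply/imset_injP.
rewrite eqn_leq leq_imset_card (leq_trans le_FB) // subset_leq_card //.
apply/subsetP => b bB; have [f fF fb] := coverF b.
by apply/imsetP; exists f; rewrite // fb root_id // outB bB.
Qed.

End FunctionalGraph.

Section Exchange.
Variables (R : comNzRingType) (P : po_ring R) (E : finType) (n : nat).
Variables (s t : E -> 'I_n) (pi : E -> R) (mu : E -> {set E}) (zeta : {set E}).
Hypothesis pg : is_Pgraph P s t pi mu.
Local Notation mustar := (mustar P pi mu).
Local Notation immu := (immu P pi mu).
Implicit Types (D : {set E}) (e : E).

Definition exchange (D : {set E}) : {set E} := (zeta :\: D) :|: mustar D.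

Lemma mustarU D1 D2 : mustar (D1 :|: D2) = mustar D1 :|: mustar D2.
Proof.
apply/setP => e; rewrite !inE -andb_orr; congr (_ && _).
apply/existsP/orP => [[e' /andP [/setUP [] e'D e'e]]|[] /existsP [e' /andP [e'D e'e]]].
- by left; apply/existsP; exists e'; rewrite e'D.
- by right; apply/existsP; exists e'; rewrite e'D.
- by exists e'; rewrite inE e'D.
- by exists e'; rewrite inE e'D orbT.
Qed.

Lemma mustar_src D e : e \in mustar D -> exists2 e', e' \in D & s e' = s e.
Proof.
rewrite inE => /andP [neg_e /existsP [e' /andP [e'D e'e]]].
by have [_ _ /(_ e neg_e) [_ src _] _ _] := pg; exists e'; last exact: src.
Qed.

Lemma has_out_exchange D : D \subset zeta :&: immu -> has_out s (exchange D) =1 has_out s zeta.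
Proof.
move=> DZ u; apply/existsP/existsP => [[e /andP [eD /eqP <-]]|[e /andP [eZ /eqP <-]]].
  case/setUP: eD => [/setDP [eZ _]|/mustar_src [e' e'D <-]]; first by exists e; rewrite eZ /=.
  by exists e'; rewrite eqxx andbT; have /setIP [] := subsetP DZ e' e'D.
have [eD|eND] := boolP (e \in D); last by exists e; rewrite /exchange !inE eND eZ eqxx.
have /setIP [_] := subsetP DZ e eD; rewrite /immu => /bigcupP [g neg_g e_g].
have [_ _ /(_ g neg_g) [_ src _] _ _] := pg.
exists g; rewrite -(src e e_g) eqxx andbT /exchange !inE neg_g /=.
by apply/orP; right; apply/existsP; exists e; rewrite eD.
Qed.

Lemma exchange_outdeg D : {in zeta &, injective s} -> D \subset zeta ->
  {in exchange D &, injective s}.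
Proof.
move=> injZ DZ e1 e2; have inZ e : e \in D -> e \in zeta by move/(subsetP DZ).
have [_ _ _ disj _] := pg.
case/setUP => [/setDP [e1Z e1D]|m1]; case/setUP => [/setDP [e2Z e2D]|m2] se.
- exact: injZ.
- have [e' e'D se'] := mustar_src m2.
  by move: e1D; rewrite (injZ _ _ e1Z (inZ _ e'D) (etrans se (esym se'))) e'D.
- have [e' e'D se'] := mustar_src m1.
  by move: e2D; rewrite (injZ _ _ e2Z (inZ _ e'D) (etrans (esym se) (esym se'))) e'D.
move: m1 m2; rewrite !inE => /andP [neg1 /existsP [e1' /andP [e1D e1m]]].
move=> /andP [neg2 /existsP [e2' /andP [e2D e2m]]].
have [_ _ pg3 _ _] := pg; have [_ src1 _] := pg3 _ neg1; have [_ src2 _] := pg3 _ neg2.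
have e12' : e1' = e2'.
  by apply: injZ; rewrite ?inZ // (src1 _ e1m) (src2 _ e2m).
apply/eqP/negPn/negP => ne.
by move: (disj _ _ neg1 neg2 ne) => /disjointFr /(_ e1m); rewrite e12' e2m.
Qed.

Lemma mem_exchangeU D1 D2 e :
  e \in exchange (D1 :|: D2) -> e \notin exchange D1 -> e \in mustar D2.
Proof.
move=> eU; apply: contraNT => eN2; move: eU.
rewrite /exchange mustarU !(in_setU, in_setD) (negbTE eN2) negb_or orbF.
by case/orP => [/andP [/andP [-> _] ->] //|->]; rewrite orbT.
Qed.

(* A directed cycle would need a negative edge from each of [mustar D1] and [mustar D2]. *)
Lemma exchangeU_dcycle_free D1 D2 : dcycle_free s t (exchange D1) ->
  dcycle_free s t (exchange D2) -> dcycle_free s t (exchange (D1 :|: D2)).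
Proof.
move=> acyc1 acyc2 c cyc cZ.
have /allPn [x1 x1c x1N] : ~~ all [in exchange D1] c by apply/negP => /allP /(acyc1 c cyc).
have /allPn [x2 x2c x2N] : ~~ all [in exchange D2] c by apply/negP => /allP /(acyc2 c cyc).
have m1 : x1 \in mustar D2 by apply: mem_exchangeU x1N; apply: cZ.
have m2 : x2 \in mustar D1 by apply: mem_exchangeU x2N; rewrite setUC; apply: cZ.
have neq_x12 : x1 != x2.
  by apply: contraNneq x2N => <-; rewrite /exchange in_setU m1 orbT.
have neg D x : x \in mustar D -> Eneg P pi x by rewrite inE => /andP [].
have two : 2 <= size (filter (Eneg P pi) c).
  apply: (@uniq_leq_size _ [:: x1; x2]); first by rewrite /= inE neq_x12.
  move=> y; rewrite !inE => /orP [] /eqP ->.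
    by rewrite mem_filter (neg _ _ m1) x1c.
  by rewrite mem_filter (neg _ _ m2) x2c.
have [_ one_neg _ _ _] := pg.
by have := one_neg c cyc; rewrite -size_filter => /(leq_trans two).
Qed.

Section ExchangeUnion.
Variables (F B : {set 'I_n}) (D1 D2 : {set E}).
Hypotheses (no_loop : forall e, s e != t e) (le_FB : #|F| <= #|B|).
Hypotheses (th0 : Theta s t F B zeta).
Hypotheses (th1 : Theta s t F B (exchange D1)) (th2 : Theta s t F B (exchange D2)).
Hypotheses (sub1 : D1 \subset zeta :&: immu) (sub2 : D2 \subset zeta :&: immu).
Local Notation Z := (exchange (D1 :|: D2)).

Lemma exchangeU_sub : D1 :|: D2 \subset zeta :&: immu.
Proof. by rewrite subUset sub1 sub2. Qed.

Lemma exchangeU_forest : rooted_forest s t B Z.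
Proof.
have /(ThetaP no_loop) [[inj0 _ out0] _] := th0.
have /(ThetaP no_loop) [[_ acyc1 _] _] := th1.
have /(ThetaP no_loop) [[_ acyc2 _] _] := th2.
split; last by move=> u; rewrite has_out_exchange ?exchangeU_sub.
  by apply: exchange_outdeg inj0 _; apply: subset_trans exchangeU_sub (subsetIl _ _).
exact: exchangeU_dcycle_free.
Qed.

Section StartNode.
Variables (j om : 'I_n).
Hypotheses (jF : j \in F) (omF : om \in F) (j_om : j != om).
Hypothesis star : forall v q, dpath s t j v q -> has (Eneg P pi) q -> om \in j :: map t q.

(* The first edge of [mustar] on the walk from [j] would, by [star], lead the walk through [om]
   inside a single forest [exchange D], joining the two distinct nodes [j] and [om] of [F]. *)
Lemma exchangeU_walk_avoids p e :
  out_edge s Z (iter p (succ s t Z) j) = Some e -> e \notin mustar (D1 :|: D2).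
Proof.
elim/ltn_ind: p e => p IH e xe; apply/negP => e_neg.
have [_ acZ _] := exchangeU_forest.
pose x r := iter r (succ s t Z) j.
have [eZ se _] := out_edge_Some t xe.
have out_p : has_out s Z (x p) by rewrite /x -se has_out_edge.
have [D [thD DU eD]] :
    exists D, [/\ Theta s t F B (exchange D), D \subset D1 :|: D2 & e \in exchange D].
  move: (e_neg); rewrite mustarU => /setUP [m|m]; [exists D1 | exists D2];
    by rewrite /exchange ?subsetUl ?subsetUr in_setU m orbT.
have agree r : r < p.+1 -> succ s t Z (x r) = succ s t (exchange D) (x r).
  move=> le_rp; apply: succ_eq_sub (Theta_outdeg no_loop thD) _ _; last first.
    by move=> _; apply: has_out_iter out_p.
  move=> e' xe'; have [lt_rp|ge_rp] := ltnP r p; last first.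
    have eq_rp : r = p by apply/eqP; rewrite eqn_leq -ltnS le_rp ge_rp.
    by move: xe'; rewrite /x eq_rp xe => -[<-].
  have [e'Z _ _] := out_edge_Some t xe'; move: e'Z (IH r lt_rp e' xe').
  rewrite /exchange !in_setU => /orP [/setDP [e'z e'N] _|-> //].
  by apply/orP; left; apply/setDP; split=> //; apply: contra e'N; apply: (subsetP DU).
have [_ walk_t] := walk_map out_p.
have := star (dpath_walk acZ out_p); rewrite walk_t -trajectS.
case/(_ _)/trajectP => [|r lt_r om_r].
  by apply/hasP; exists e; [apply: mem_walk_out_edge xe | move: e_neg; rewrite inE => /andP []].
have /(ThetaP no_loop) [[_ acD _] _] := thD.
have eq_root : root s t (exchange D) om = root s t (exchange D) j.
  rewrite om_r (@iter_succ_eq _ _ s t Z (exchange D)) ?root_iter ?root_sink //.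
  by move=> r' lt_r'; apply: agree; apply: leq_trans lt_r' _.
by move: j_om; rewrite (Theta_root_inj no_loop thD le_FB omF jF eq_root) eqxx.
Qed.

Lemma root_exchangeU_start : root s t Z j = root s t zeta j.
Proof.
have /(ThetaP no_loop) [[inj0 _ _] _] := th0.
apply: iter_succ_eq => r _; apply: succ_eq_sub inj0 _ _.
  move=> e xe; have [eZ _ _] := out_edge_Some t xe; move: eZ (exchangeU_walk_avoids xe).
  by rewrite /exchange in_setU => /orP [/setDP [] | ->].
by rewrite has_out_exchange ?exchangeU_sub.
Qed.

End StartNode.

Lemma Theta_exchangeU : (forall f, f \in F -> root s t Z f = root s t zeta f) -> Theta s t F B Z.
Proof.
move=> rootF; apply/(ThetaP no_loop); split=> [|u]; first exact: exchangeU_forest.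
have [_ acZ _] := exchangeU_forest.
have /(ThetaP no_loop) [[_ _ _] cover0] := th0.
have r_sink : ~~ has_out s zeta (root s t Z u).
  by rewrite -(has_out_exchange exchangeU_sub) root_sink.
by have [f fF fr] := cover0 (root s t Z u); exists f; rewrite // rootF // fr root_id.
Qed.

End ExchangeUnion.

End Exchange.

Lemma card_Fset d m (jn : nat -> 'I_m.+1) : #|Fset d jn| <= d.+1.
Proof.
have sub : Fset d jn \subset ord_max |: [set jn i.+1 | i : 'I_d].
  apply/subsetP => x; rewrite inE => /orP [/eqP ->|/existsP [i /eqP ->]].
    by rewrite setU11.
  by rewrite setU1r // imset_f.
apply: leq_trans (subset_leq_card sub) _; rewrite cardsU1.
have le_img : #|[set jn i.+1 | i : 'I_d]| <= d by rewrite -[X in _ <= X]card_ord leq_imset_card.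
exact: leq_add (leq_b1 _) le_img.
Qed.

Section Blocks.
Variables (d : nat) (mb : nat -> nat).
Local Notation bs := (bstart mb).
Local Notation m := (msum d mb).
Local Notation inblk := (inblk d mb).

Lemma bstartS i : 0 < i -> bs i.+1 = bs i + mb i.
Proof. by case: i => // i _; rewrite /bstart big_nat_recr. Qed.

Lemma bstart_mono : {homo bs : i j / i <= j}.
Proof.
apply: homo_leq => [//|j i k|[|i]]; first exact: leq_trans.
  by rewrite /bstart big_geq // big_geq.
by rewrite (@bstartS i.+1) ?leq_addr.
Qed.

Lemma msumE : m = mb 0 + bs d.+1.
Proof. by rewrite /msum big_ord_recl /bstart big_add1 /= big_mkord. Qed.

Lemma inblkE i v : 0 < i <= d -> inblk i v = (bs i <= v < bs i.+1).
Proof. by case/andP=> i_gt0 le_id; rewrite /inblk eqn0Ngt i_gt0 le_id bstartS. Qed.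

Lemma inblk0E v : inblk 0 v = (bs d.+1 <= v <= m).
Proof. by rewrite /inblk /= {1}msumE addKn. Qed.

Lemma inblk_top v : inblk d.+1 v = (v == m).
Proof. by rewrite /inblk /= ltnn eqxx. Qed.

Lemma inblk_lt i v : 0 < i <= d -> inblk i v -> v < bs d.+1.
Proof.
move=> /[dup] /andP [_ le_id] /inblkE -> /andP [_ lt_v].
exact: leq_trans lt_v (bstart_mono (le_id : i < d.+1)).
Qed.

Lemma inblk0_max : inblk 0 m.
Proof. by rewrite inblk0E leqnn andbT msumE leq_addl. Qed.

Lemma inblk0N i v : 0 < i <= d -> inblk 0 v -> ~~ inblk i v.
Proof.
move=> i_range; rewrite inblk0E => /andP [le_v _].
by apply/negP => /(inblk_lt i_range); rewrite ltnNge le_v.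
Qed.

Lemma inblk_neq_max i v : 0 < i <= d -> inblk i v -> v != m.
Proof.
move=> i_range /(inblk_lt i_range); apply: contraTneq => ->.
by rewrite msumE -leqNgt leq_addl.
Qed.

Lemma inblk_inj i j v : 0 < i <= d.+1 -> 0 < j <= d.+1 -> inblk i v -> inblk j v -> i = j.
Proof.
wlog le_ij : i j / i <= j.
  move=> hwlog i_range j_range vi vj; case: (leqP i j) => [le_ij|/ltnW le_ji].
    exact: hwlog.
  by apply/esym; apply: hwlog.
move=> i_range j_range vi vj.
case/andP: i_range => i_gt0; rewrite leq_eqVlt ltnS => /orP [/eqP i_top|le_id].
  by apply/eqP; rewrite eqn_leq le_ij i_top; case/andP: j_range.
case/andP: j_range => j_gt0; rewrite leq_eqVlt ltnS => /orP [/eqP j_top|le_jd].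
  move: vj (inblk_lt (introT andP (conj i_gt0 le_id)) vi); rewrite j_top inblk_top => /eqP ->.
  by rewrite msumE ltnNge leq_addl.
apply/eqP; rewrite eqn_leq le_ij leqNgt; apply/negP => lt_ij.
move: vi vj; rewrite !inblkE ?i_gt0 ?j_gt0 // => /andP [_ lt_vi] /andP [le_jv _].
by move: (leq_trans (bstart_mono lt_ij) le_jv); rewrite leqNgt lt_vi.
Qed.

Lemma inblk_cover v : v <= m -> inblk 0 v \/ exists2 i, 0 < i <= d & inblk i v.
Proof.
move=> le_vm; have [le_v|lt_v] := leqP (bs d.+1) v; first by left; rewrite inblk0E le_v.
right; have [i lt_vi min_i] := ex_minnP (ex_intro (fun i => v < bs i.+1) d lt_v).
have le_id : i <= d := min_i d lt_v.
case: i lt_vi min_i le_id => [|i] lt_vi min_i le_id.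
  by move: lt_vi; rewrite /bstart big_geq.
exists i.+1; first by rewrite le_id.
rewrite inblkE ?le_id // lt_vi andbT leqNgt; apply/negP => /min_i.
by rewrite ltnn.
Qed.

Lemma inblk0_closed (E : finType) (s t : E -> 'I_m.+1) :
  (forall e i j, i <= d -> 0 < j <= d -> i != j -> inblk i (s e) -> ~~ inblk j (t e)) ->
  forall e, inblk 0 (s e) -> inblk 0 (t e).
Proof.
move=> compat e se0; have [//|[j j_range tej]] := inblk_cover (ltn_ord (t e)).
have /andP [j_gt0 _] := j_range.
move: (compat e 0 j (leq0n d) j_range).
by rewrite eq_sym -lt0n j_gt0 se0 tej => /(_ isT isT).
Qed.

Section BlockRoots.
Variables (k : nat) (w : nat -> 'I_m.+1).
Hypotheses (k_range : 0 < k <= d.+1).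
Hypothesis w_blk : forall j, 0 < j <= d.+1 -> j != k -> inblk j (w j).
Local Notation Bset := [set w (val j) | j : 'I_d.+2 & (0 < val j) && (val j != k)].

Lemma card_Bset : #|Bset| = d.
Proof.
have idx_range (j : 'I_d.+2) : 0 < j -> 0 < j <= d.+1 by move=> ->; rewrite -ltnS ltn_ord.
rewrite card_in_imset; last first.
  move=> i j; rewrite !inE => /andP [/idx_range i_range i_k] /andP [/idx_range j_range j_k] wij.
  apply: val_inj; apply: (inblk_inj i_range j_range (w_blk i_range i_k)).
  by rewrite wij; apply: w_blk.
have /andP [k_gt0 k_ord] := k_range; rewrite -ltnS in k_ord.
have -> : [set j : 'I_d.+2 | (0 < val j) && (val j != k)] = ~: [set ord0; Ordinal k_ord].
  by apply/setP => j; rewrite !inE negb_or -!val_eqE /= lt0n.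
have := cardsC [set ord0; Ordinal k_ord].
by rewrite card_ord cards2 -val_eqE /= eq_sym -lt0n k_gt0; lia.
Qed.

Lemma Bset_block0 x : x \in Bset -> inblk 0 x -> x = ord_max.
Proof.
case/imsetP => j; rewrite inE => /andP [j_gt0 j_k] -> wj0; apply: val_inj => /=.
have j_range : 0 < j <= d.+1 by rewrite j_gt0 -ltnS ltn_ord.
have := w_blk j_range j_k; have [lt_jd|ge_jd] := ltnP j d.+1.
  by rewrite (negbTE (inblk0N _ wj0)) // j_gt0.
have -> : val j = d.+1 by apply/eqP; rewrite eqn_leq ge_jd -ltnS ltn_ord.
by rewrite inblk_top => /eqP.
Qed.

Lemma Bset_block0_uniq l : ord_max \notin l |: Bset ->
  {in l |: Bset &, forall x y : 'I_m.+1, inblk 0 x -> inblk 0 y -> x = y}.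
Proof.
move=> maxNB; suff onl z : z \in l |: Bset -> inblk 0 z -> z = l.
  by move=> x y xB yB x0 y0; rewrite (onl x xB x0) (onl y yB y0).
case/setU1P => // zB z0.
by move: maxNB; rewrite -(Bset_block0 zB z0) setU1r.
Qed.

End BlockRoots.
End Blocks.

Unset Implicit Arguments.
Local Open Scope ring_scope.

Theorem lemma5p3
  (R : comNzRingType) (P : po_ring R)
  (d : nat) (mb : nat -> nat)
  (A : 'M[R]_(msum d mb)) (b : 'cV[R]_(msum d mb))
  (jn : nat -> 'I_(msum d mb).+1)
  (E : finType) (s t : E -> 'I_(msum d mb).+1) (pi : E -> R) (mu : E -> {set E})
  (k : nat) (Bt : {set 'I_(msum d mb).+1}) (l : 'I_(msum d mb).+1)
  (zeta E1 E2 : {set E}) :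
  (* block structure of A and b *)
  (forall i, (1 <= i <= d)%N -> forall r c : 'I_(msum d mb),
      inblk d mb i r -> ~~ inblk d mb i c -> A r c = 0) ->
  (forall i, (1 <= i <= d)%N -> forall r1 r2 : 'I_(msum d mb),
      inblk d mb i r1 -> inblk d mb i r2 -> b r1 0 != 0 -> b r2 0 != 0 -> r1 = r2) ->
  (* j_i in N_i and b_j = 0 for j <= m - m_0 outside {j_1..j_d} *)
  (forall i, (1 <= i <= d)%N -> inblk d mb i (jn i)) ->
  (forall r : 'I_(msum d mb), (r < msum d mb - mb 0%N)%N ->
      (forall i, (1 <= i <= d)%N -> val r != val (jn i)) -> b r 0 = 0) ->
  (* no self-loops *)
  (forall e, s e != t e) ->
  (* A-compatibility (i) *)
  (forall e (i j : nat), (i <= d)%N -> (1 <= j <= d)%N -> i != j ->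
      inblk d mb i (s e) -> ~~ inblk d mb j (t e)) ->
  (* A-compatibility (ii) *)
  (forall r : 'I_(msum d mb), widen_ord (leqnSn _) r \notin Fset d jn ->
      (forall c : 'I_(msum d mb),
         laplacian s t pi (widen_ord (leqnSn _) r) (widen_ord (leqnSn _) c) = A r c) /\
      laplacian s t pi (widen_ord (leqnSn _) r) ord_max = b r 0) ->
  (* P-graph *)
  is_Pgraph P s t pi mu ->
  (* condition ( * ) *)
  (forall (l' : 'I_(msum d mb).+1), (l' < msum d mb)%N ->
      forall i, (1 <= i <= d)%N -> forall p, dpath s t (jn i) l' p ->
      has (Eneg P pi) p -> ord_max \in jn i :: map t p) ->
  (* Bt in B^k *)
  (1 <= k <= d.+1)%N ->
  (exists w : nat -> 'I_(msum d mb).+1,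
      (forall j, (1 <= j <= d.+1)%N -> j != k -> inblk d mb j (w j)) /\
      Bt = [set w (val j) | j : 'I_d.+2 & (0 < val j)%N && (val j != k)]) ->
  l \notin Bt ->
  Theta s t (Fset d jn) (l |: Bt) zeta ->
  (* E1, E2 in E^F_zeta *)
  (E1 \subset zeta :&: immu P pi mu /\
     Theta s t (Fset d jn) (l |: Bt) ((zeta :\: E1) :|: mustar P pi mu E1)) ->
  (E2 \subset zeta :&: immu P pi mu /\
     Theta s t (Fset d jn) (l |: Bt) ((zeta :\: E2) :|: mustar P pi mu E2)) ->
  (E1 :|: E2 \subset zeta :&: immu P pi mu /\
     Theta s t (Fset d jn) (l |: Bt) ((zeta :\: (E1 :|: E2)) :|: mustar P pi mu (E1 :|: E2))).
Proof.
move=> _ _ jn_blk _ no_loop compat _ pg star k_range [w [w_blk Bt_def]] lNBt th0.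
move=> [sub1 th1] [sub2 th2].
set F := Fset d jn in th0 th1 th2 *.
have le_FB : (#|F| <= #|l |: Bt|)%N.
  by rewrite cardsU1 lNBt Bt_def card_Bset //; apply: card_Fset.
split; first exact: exchangeU_sub.
apply: (Theta_exchangeU pg no_loop th0 th1 th2 sub1 sub2) => f.
rewrite inE => /orP [/eqP -> | /existsP [i /eqP ->]].
  have /(ThetaP no_loop) [forest0 _] := th0.
  apply: (root_eq_closed (S := fun v => inblk d mb 0 v) (u := ord_max)
           (exchangeU_forest pg no_loop th0 th1 th2 sub1 sub2) forest0
           (inblk0_closed compat) (inblk0_max d mb)).
  by rewrite Bt_def; apply: Bset_block0_uniq.
have i_range : (0 < i.+1 <= d)%N by rewrite ltn_ord.
have jF : jn i.+1 \in F by rewrite inE; apply/orP; right; apply/existsP; exists i.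
have omF : ord_max \in F by rewrite inE eqxx.
apply: (root_exchangeU_start pg no_loop le_FB th0 th1 th2 sub1 sub2 jF omF).
  by apply: contraNneq (inblk_neq_max i_range (jn_blk _ i_range)) => ->.
move=> v q dpq neg_q; have [lt_v|ge_v] := ltnP v (msum d mb).
  exact: star v lt_v _ i_range q dpq neg_q.
have -> : ord_max = v by apply/val_inj/eqP; rewrite eqn_leq ge_v -ltnS ltn_ord.
by case/and3P: dpq => _ /eqP <- _; apply: mem_last.
Qed.
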